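(* Let $n=n_1+\dots+n_k$ be a partition of $n$ into positive integers, let $G=U(n)$, and let $L=U(n_1)\times\cdots\times U(n_k)$ and $H=U(1)\times U(n-1)$ be the natural block-diagonal subgroups of $G$. For $1\le i\le k-1$ set $X_i:=-E_{1,\,n_1+\dots+n_i+1}+E_{n_1+\dots+n_i+1,\,1}$ and $B_i:=\exp(\mathbb{R}X_i)\simeq\mathbb{T}$, and let $B:=B_1B_2\cdots B_{k-1}=\{b_1\cdots b_{k-1}:b_i\in B_i\}\subset O(n)$. Then $G=LBH$.
   Context: $E_{ij}$ denotes the $n\times n$ matrix unit with $1$ in position $(i,j)$ and $0$ elsewhere; $\mathbb{T}$ is the circle group. $LBH=\{xbh:x\in L,b\in B,h\in H\}$. *)

From HB Require Import structures.
From mathcomp Require Import all_boot all_order all_algebra.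
From mathcomp Require Import complex.
From mathcomp Require Import reals trigo.
Set Implicit Arguments. Unset Strict Implicit. Unset Printing Implicit Defensive.
Import Order.TTheory GRing.Theory Num.Theory.
Local Open Scope ring_scope.
Local Open Scope complex_scope.

Section Defs.
Variable R : realType.
Notation C := R[i].

Definition adjmx n (A : 'M[C]_n) : 'M[C]_n := (map_mx (fun z : C => z^*) A)^T.

Definition unitary n (A : 'M[C]_n) : Prop := adjmx A *m A = 1%:M.

(* partial sums m_i = n_1 + ... + n_i for 1 <= i <= k-1 *)
Definition cuts (s : seq nat) : seq nat :=
  [seq sumn (take i s) | i <- iota 1 (size s).-1].

Definition same_block (s : seq nat) (i j : nat) : bool :=
  all (fun c => (i < c)%N == (j < c)%N) (cuts s).
Definition inL (s : seq nat) n (A : 'M[C]_n) : Prop :=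
  unitary A /\ forall i j : 'I_n, ~~ same_block s i j -> A i j = 0.

Definition inH n (A : 'M[C]_n) : Prop :=
  unitary A /\ forall i j : 'I_n, ((val i == 0%N) (+) (val j == 0%N)) -> A i j = 0.

(* exp(t X) where X = -E_{1,c+1} + E_{c+1,1} (1-based), i.e. 0-based indices 0 and c *)
Definition rot n (c : nat) (t : R) : 'M[C]_n :=
  \matrix_(a, b)
    if a == b then (if (val a == 0%N) || (val a == c) then (cos t)%:C else 1)
    else if (val a == c) && (val b == 0%N) then (sin t)%:C
    else if (val a == 0%N) && (val b == c) then (- sin t)%:C
    else 0.

Fixpoint rotprod n (l : seq (nat * R)) : 'M[C]_n :=
  match l with
  | [::] => 1%:M
  | (c, t) :: l' => rot n c t *m rotprod n l'
  end.

Definition inB (s : seq nat) n (A : 'M[C]_n) : Prop :=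
  exists ts : seq R, size ts = size (cuts s) /\ A = rotprod n (zip (cuts s) ts).

End Defs.

From Pilot Require Import Defs.
From HB Require Import structures.
From mathcomp Require Import all_boot all_order all_algebra.
From mathcomp Require Import complex.
From mathcomp Require Import reals trigo.
From mathcomp Require Import ring lra zify.
Import Order.TTheory GRing.Theory Num.Theory.
Local Open Scope ring_scope.
Local Open Scope complex_scope.

(* A unitary [g] lies in [L B H] as soon as its first column [v = g e_1] can be
   written [l b (rho e_1)] with [l] in [L] and [b] in [B]: then [h = b^-1 l^-1 g]
   is unitary with first column [rho e_1], and a unitary matrix whose first
   column is a multiple of [e_1] has first row a multiple of [e_1^T], i.e. lies
   in [H].  On each block, a diagonal phase followed by a Householder
   reflection maps the first basis vector of the block, scaled by the norm of
   the block of [v], to that block of [v]; so [v = l y] with [y] real,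
   nonnegative and supported on the block starts [0, m_1, ..., m_(k-1)].  The rotation [B_i] acts in the plane
   of [e_1] and [e_(m_i+1)] only, so successive rotations (Givens' method)
   collect [y] into its first coordinate. *)

Lemma polar_coordinates {R : realType} (p q : R) :
  exists t, Num.sqrt (p ^+ 2 + q ^+ 2) * cos t = p /\
            Num.sqrt (p ^+ 2 + q ^+ 2) * sin t = q.
Proof.
set r := Num.sqrt _.
have r_ge0 : 0 <= r by apply: sqrtr_ge0.
have r2 : r ^+ 2 = p ^+ 2 + q ^+ 2 by rewrite sqr_sqrtr // addr_ge0 ?sqr_ge0.
have [r0|r_neq0] := eqVneq r 0.
  have p2q2 : p ^+ 2 + q ^+ 2 = 0 by rewrite -r2 r0 expr0n.
  have /eqP : p ^+ 2 = 0 by move: (sqr_ge0 p) (sqr_ge0 q); lra.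
  rewrite sqrf_eq0 => /eqP p0; move: p2q2; rewrite p0 expr0n add0r => /eqP.
  by rewrite sqrf_eq0 => /eqP q0; exists 0; rewrite r0 !mul0r.
have r_gt0 : 0 < r by rewrite lt_def r_neq0.
set x := p / r.
have rx : r * x = p by rewrite mulrC divfK.
have x_itv : x \in `[-1, 1].
  have : x ^+ 2 <= 1.
    by rewrite expr_div_n ler_pdivrMr ?exprn_gt0 // mul1r r2 lerDl sqr_ge0.
  by rewrite -ler_sqrt ?ler01 ?sqr_ge0 // sqrtr1 sqrtr_sqr ler_norml in_itv.
have r_sin : r * Num.sqrt (1 - x ^+ 2) = `|q|.
  rewrite -(ger0_norm r_ge0) -sqrtr_sqr -(sqrtr_sqr q) -sqrtrM ?sqr_ge0 //.
  by congr Num.sqrt; rewrite mulrBr mulr1 -exprMn rx r2; ring.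
have [q_ge0|q_lt0] := lerP 0 q.
  by exists (acos x); rewrite acosK // sin_acos ?r_sin ?ger0_norm // -in_itv.
exists (- acos x); rewrite cosN sinN acosK // sin_acos -?in_itv //.
by rewrite mulrN r_sin ltr0_norm ?opprK.
Qed.

Lemma sumn_gt0 {s : seq nat} : s != [::] -> all (fun m => 0 < m)%N s -> (0 < sumn s)%N.
Proof. by case: s => [|m s] //= _ /andP[m_gt0 _]; apply: leq_trans m_gt0 (leq_addr _ _). Qed.

Lemma ltn_sumn_take (s : seq nat) i j : all (fun m => 0 < m)%N s ->
  (i < j <= size s)%N -> (sumn (take i s) < sumn (take j s))%N.
Proof.
elim: s i j => [|a s IH] i j /=; first lia.
case/andP=> a_gt0 s_pos; case: i j => [|i] [|j] //=; first lia.
by rewrite ltn_add2l; apply: IH.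
Qed.

Lemma mem_cuts_bounds (s : seq nat) c : all (fun m => 0 < m)%N s ->
  c \in cuts s -> (0 < c < sumn s)%N.
Proof.
move=> s_pos /mapP[i + ->]; rewrite mem_iota => i_bnd.
have := ltn_sumn_take s 0%N i s_pos; have := ltn_sumn_take s i (size s) s_pos.
rewrite take0 take_size; lia.
Qed.

Lemma cuts_uniq (s : seq nat) : all (fun m => 0 < m)%N s -> uniq (cuts s).
Proof.
move=> s_pos; rewrite map_inj_in_uniq ?iota_uniq // => i j.
rewrite !mem_iota => i_bnd j_bnd eq_ij; apply/eqP/contraT => /eqP ij.
have [lt|lt] : (i < j \/ j < i)%N by lia.
- by have := ltn_sumn_take s i j s_pos; lia.
- by have := ltn_sumn_take s j i s_pos; lia.
Qed.

Lemma same_block_predn s i : (0 < i)%N -> i \notin cuts s -> same_block s i.-1 i.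
Proof.
move=> i_gt0 i_cut; apply/allP => c c_in.
have /eqP c_neq : c != i by apply: contraNneq i_cut => <-.
lia.
Qed.

Section Pivot.
Context {n : nat} {e : rel 'I_n}.
Hypotheses (e_refl : reflexive e) (e_sym : symmetric e) (e_trans : transitive e).

Definition pivot (x : 'I_n) : 'I_n := [arg min_(y < x | e x y) val y].

Lemma pivot_rel x : e x (pivot x).
Proof. by rewrite /pivot; case: arg_minnP. Qed.

Lemma pivot_min x y : e x y -> (pivot x <= y)%N.
Proof. by rewrite /pivot; case: arg_minnP => // z _; apply. Qed.

Lemma pivot_eq {x y} : e x y -> pivot x = pivot y.
Proof.
move=> xy; apply/val_inj/eqP; rewrite eqn_leq !pivot_min //.
  by apply: e_trans _ _ _ _ (pivot_rel x); rewrite e_sym.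
exact: e_trans _ _ _ xy (pivot_rel y).
Qed.

End Pivot.

Arguments pivot {n} e x.

Definition block_rel (s : seq nat) n : rel 'I_n := fun i j => same_block s i j.

Lemma block_rel_refl s n : reflexive (block_rel s n).
Proof. by move=> i; apply/allP. Qed.

Lemma block_rel_sym s n : symmetric (block_rel s n).
Proof. by move=> i j; apply: eq_all => c; rewrite eq_sym. Qed.

Lemma block_rel_trans s n : transitive (block_rel s n).
Proof.
move=> j i k /allP ij /allP jk; apply/allP => c c_in.
by rewrite (eqP (ij c c_in)) (eqP (jk c c_in)).
Qed.

Lemma block_pivot_cuts s n (x : 'I_n) :
  pivot (block_rel s n) x = x -> val x != 0%N -> val x \in cuts s.
Proof.
move=> x_piv x_neq0; apply: contraT => x_cut.
have x_lt : ((val x).-1 < n)%N by apply: leq_ltn_trans (leq_pred _) (ltn_ord x).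
have x_rel : block_rel s n x (Ordinal x_lt).
  by rewrite block_rel_sym /block_rel /= same_block_predn ?lt0n.
have := pivot_min (@block_rel_refl s n) _ _ x_rel.
by rewrite x_piv leqNgt ltn_predL lt0n x_neq0.
Qed.

Section Unitary.
Context {R : realType} {n : nat}.
Local Notation C := R[i].
Local Open Scope ring_scope.
Implicit Types A B P : 'M[C]_n.

Lemma adjmxE A i j : adjmx A i j = (A j i)^*.
Proof. by rewrite !mxE. Qed.

Lemma adjmxK A : adjmx (adjmx A) = A.
Proof. by apply/matrixP => i j; rewrite !adjmxE conjCK. Qed.

Lemma adjmxM A B : adjmx (A *m B) = adjmx B *m adjmx A.
Proof.
apply/matrixP => i j; rewrite !mxE rmorph_sum; apply: eq_bigr => k _.
by rewrite !mxE rmorphM mulrC.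
Qed.

Lemma unitaryC {A} : unitary A -> A *m adjmx A = 1%:M.
Proof. exact: mulmx1C. Qed.

Lemma adjmx_mulK m A (B : 'M[C]_(n, m)) : unitary A -> adjmx A *m (A *m B) = B.
Proof. by move=> AU; rewrite mulmxA AU mul1mx. Qed.

Lemma unitaryM {A B} : unitary A -> unitary B -> unitary (A *m B).
Proof.
rewrite /unitary adjmxM => AU BU.
by rewrite mulmxA -[_ *m adjmx A *m A]mulmxA AU mulmx1.
Qed.

Lemma unitary_adj {A} : unitary A -> unitary (adjmx A).
Proof. by rewrite /unitary adjmxK; apply: unitaryC. Qed.

Lemma unitary1 : unitary (1%:M : 'M[C]_n).
Proof. by apply/matrixP => i j; rewrite mulmx1 adjmxE !mxE conjC_nat eq_sym. Qed.

Lemma unitary_diag (d : 'rV[C]_n) : (forall i, (d 0 i)^* * d 0 i = 1) ->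
  unitary (diag_mx d).
Proof.
move=> d_unit; rewrite /unitary; have -> : adjmx (diag_mx d) = diag_mx (\row_i (d 0 i)^*).
  apply/matrixP => i j; rewrite adjmxE !mxE rmorphMn eq_sym.
  by case: (eqVneq i j) => [->|_]; rewrite ?mulr0n.
by rewrite mulmx_diag; apply/matrixP => i j; rewrite !mxE d_unit.
Qed.

Lemma adjmx_reflection P : adjmx P = P -> adjmx (1%:M - 2 *: P) = 1%:M - 2 *: P.
Proof.
move=> P_herm; apply/matrixP => i j; rewrite -[in RHS]P_herm adjmxE !mxE.
by rewrite rmorphB rmorphM !rmorph_nat eq_sym.
Qed.

Lemma reflection_involutive P : P *m P = P ->
  (1%:M - 2 *: P) *m (1%:M - 2 *: P) = 1%:M.
Proof.
move=> P_idem; rewrite mulmxBl mulmxBr !mul1mx mulmxBr mulmx1.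
rewrite -scalemxAl -scalemxAr P_idem scalerA.
apply/matrixP => i j; rewrite !mxE; ring.
Qed.

Lemma unitary_reflection P : adjmx P = P -> P *m P = P ->
  unitary (1%:M - 2 *: P).
Proof. by move=> P_herm P_idem; rewrite /unitary adjmx_reflection ?reflection_involutive. Qed.

End Unitary.

Section BlockDiagonal.
Context {T : pzSemiRingType} {n : nat} {e : rel 'I_n}.

Definition block_diagonal (A : 'M[T]_n) := forall x z, ~~ e x z -> A x z = 0.

Lemma block_diagonal_diag (d : 'rV[T]_n) : reflexive e -> block_diagonal (diag_mx d).
Proof.
move=> e_refl x z xz; rewrite mxE.
by case: eqVneq xz => [->|_]; rewrite ?e_refl ?mulr0n.
Qed.

Lemma block_diagonalM (A B : 'M[T]_n) : transitive e ->
  block_diagonal A -> block_diagonal B -> block_diagonal (A *m B).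
Proof.
move=> e_trans A_blk B_blk x z xz; rewrite mxE big1 // => y _.
have [xy|/A_blk->] := boolP (e x y); last by rewrite mul0r.
by rewrite B_blk ?mulr0 //; apply: contra xz; apply: e_trans xy.
Qed.

End BlockDiagonal.

Arguments block_diagonal {T n} e A.

Section BlockReflection.
Context {R : realType} {n : nat} {e : rel 'I_n}.
Hypotheses (e_refl : reflexive e) (e_sym : symmetric e) (e_trans : transitive e).
Local Notation C := R[i].
Local Open Scope ring_scope.
Implicit Types (u v w : 'I_n -> C) (x y z : 'I_n).

Definition block_sqnorm w x : C := \sum_(y | e x y) `|w y| ^+ 2.

Lemma block_sqnorm_ge0 w x : 0 <= block_sqnorm w x.
Proof. by apply: sumr_ge0 => y _; rewrite exprn_ge0. Qed.

Lemma block_sqnorm_eq0 {w x} : block_sqnorm w x = 0 -> w x = 0.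
Proof.
move/eqP; rewrite psumr_eq0 => [/allP/(_ x (mem_index_enum x))|y _].
  by rewrite e_refl /= expf_eq0 /= normr_eq0 => /eqP.
by rewrite exprn_ge0.
Qed.

Lemma block_sqnorm_eq {x x'} w : e x x' -> block_sqnorm w x = block_sqnorm w x'.
Proof.
move=> xx'; apply: eq_bigl => y; apply/idP/idP; last exact: e_trans.
by move=> xy; apply: (e_trans _ _ _ _ xy); rewrite e_sym.
Qed.

(* The orthogonal projection onto the span of the restrictions of [w] to the
   blocks; on a block where [w] vanishes the inverse is [0], and so is the
   projection. *)
Definition block_proj w : 'M[C]_n :=
  \matrix_(x, z) if e x z then (block_sqnorm w x)^-1 * w x * (w z)^* else 0.

Lemma adjmx_block_proj w : adjmx (block_proj w) = block_proj w.
Proof.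
apply/matrixP => x z; rewrite adjmxE !mxE e_sym; case: ifP => [xz|_]; last exact: conjC0.
rewrite !rmorphM /= conjCK (block_sqnorm_eq w xz).
by rewrite geC0_conj ?invr_ge0 ?block_sqnorm_ge0 // mulrAC.
Qed.

Lemma block_proj_idem w : block_proj w *m block_proj w = block_proj w.
Proof.
apply/matrixP => x z; rewrite !mxE.
have [xz|xz] := boolP (e x z); last first.
  rewrite big1 // => y _; rewrite !mxE.
  have [xy|] := boolP (e x y); last by rewrite mul0r.
  by rewrite ifN ?mulr0 //; apply: contra xz; apply: e_trans xy.
set W := block_sqnorm w x.
rewrite (eq_bigr (fun y => if e x y then W^-1 * W^-1 * w x * (w z)^* * `|w y| ^+ 2 else 0)).
  rewrite -big_mkcond -mulr_sumr -/(block_sqnorm w x) -/W.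
  by have [->|W0] := eqVneq W 0; [rewrite invr0 !mul0r | field].
move=> y _; rewrite !mxE; case: ifP => xy; last by rewrite mul0r.
have yz : e y z by apply: (e_trans _ _ _ _ xz); rewrite e_sym.
by rewrite yz -(block_sqnorm_eq w xy) -/W normCK; ring.
Qed.

Definition block_reflection w : 'M[C]_n := 1%:M - 2 *: block_proj w.

Lemma unitary_block_reflection w : unitary (block_reflection w).
Proof. exact: unitary_reflection (adjmx_block_proj w) (block_proj_idem w). Qed.

Lemma block_diagonal_reflection w : block_diagonal e (block_reflection w).
Proof.
move=> x z xz; rewrite !mxE (negbTE xz) mulr0 subr0.
by case: eqVneq xz => // ->; rewrite e_refl.
Qed.

(* The hypothesis says that on each block [u] and [v] have the same norm and a
   real inner product. *)
Lemma block_reflection_col {u v} :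
  (forall x, \sum_(y | e x y) (v y - u y)^* * (v y + u y) = 0) ->
  block_reflection (fun y => v y - u y) *m \col_y v y = \col_y u y.
Proof.
set w := fun y => v y - u y => orth; apply/matrixP => x j.
set W := block_sqnorm w x; rewrite mulmxBl mul1mx -scalemxAl !mxE.
rewrite (eq_bigr (fun y => if e x y then W^-1 * w x * ((w y)^* * v y) else 0)); last first.
  by move=> y _; rewrite !mxE; case: ifP; rewrite ?mul0r // => _; rewrite mulrA.
rewrite -big_mkcond /= -mulr_sumr.
have two_dot : 2 * \sum_(y | e x y) (w y)^* * v y = W.
  apply/eqP; rewrite -subr_eq0 mulr_sumr /W /block_sqnorm -sumrB; apply/eqP.
  by rewrite -[RHS](orth x); apply: eq_bigr => y _; rewrite normCK /w; ring.
rewrite mulrCA two_dot; have [W0|W_neq0] := eqVneq W 0.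
  rewrite W0 invr0 !mul0r subr0; apply/eqP; rewrite -subr_eq0.
  by rewrite -/(w x) (block_sqnorm_eq0 W0).
by rewrite mulrAC mulVf // mul1r /w opprB addrC subrK.
Qed.

End BlockReflection.

Arguments block_sqnorm {R n} e w x.
Arguments block_proj {R n} e w.
Arguments block_reflection {R n} e w.

Section PivotReduction.
Context {R : realType} {n : nat} {e : rel 'I_n}.
Hypotheses (e_refl : reflexive e) (e_sym : symmetric e) (e_trans : transitive e).
Local Notation C := R[i].
Local Open Scope ring_scope.
Implicit Types (v : 'I_n -> C) (x y : 'I_n).

Definition phase (z : C) : C := if z == 0 then 1 else z / `|z|.

Lemma phase_unit z : (phase z)^* * phase z = 1.
Proof.
rewrite /phase; case: eqVneq => [_|z_neq0]; first by rewrite conjC1 mul1r.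
by rewrite mulrC -normCK normf_div normr_id divff ?normr_eq0 // expr1n.
Qed.

Lemma phaseJ_mul z : (phase z)^* * z = `|z|.
Proof.
rewrite /phase; case: eqVneq => [->|z_neq0]; first by rewrite mulr0 normr0.
rewrite rmorphM /= (geC0_conj (_ : 0 <= `|z|^-1)) ?invr_ge0 // mulrAC.
by rewrite [_^* * z]mulrC -normCK expr2 mulfK ?normr_eq0.
Qed.

Definition block_norm v x : C := sqrtC (block_sqnorm e v x).

Definition pivot_vec v x : C := if x == pivot e x then block_norm v x else 0.

Lemma pivot_vecE v {x y} :
  e x y -> pivot_vec v y = if y == pivot e x then block_norm v x else 0.
Proof.
move=> xy; rewrite /pivot_vec -(pivot_eq e_refl e_sym e_trans xy).
by rewrite /block_norm (block_sqnorm_eq e_sym e_trans v xy).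
Qed.

Definition pivot_target v x : C := phase (v (pivot e x)) * pivot_vec v x.

Lemma pivot_target_orth v x :
  \sum_(y | e x y) (v y - pivot_target v y)^* * (v y + pivot_target v y) = 0.
Proof.
set u := pivot_target v; set p := pivot e x; set a := v p; set r := block_norm v x.
have xp : e x p := pivot_rel e_refl x.
have uE y : e x y -> u y = if y == p then phase a * r else 0.
  move=> xy; rewrite /u /pivot_target (pivot_vecE v xy).
  by rewrite -(pivot_eq e_refl e_sym e_trans xy); case: ifP; rewrite ?mulr0.
rewrite (bigD1 p) //= (eq_bigr (fun y => `|v y| ^+ 2)); last first.
  by move=> y /andP[xy yp]; rewrite uE // (negbTE yp) subr0 addr0 normCK mulrC.
have rest : \sum_(y | e x y && (y != p)) `|v y| ^+ 2 = r ^+ 2 - `|a| ^+ 2.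
  by rewrite /r sqrtCK /block_sqnorm [in RHS](bigD1 p) //= -/a addrAC subrr add0r.
have r_conj : r^* = r by rewrite geC0_conj // sqrtC_ge0 block_sqnorm_ge0.
have aa : a^* * a = `|a| ^+ 2 by rewrite normCK mulrC.
have a_om : a^* * phase a = `|a|.
  by rewrite -[RHS]conj_normC -phaseJ_mul rmorphM /= conjCK mulrC.
rewrite rest uE // eqxx rmorphB rmorphM /= r_conj.
have -> : (a^* - (phase a)^* * r) * (a + phase a * r) = a^* * a +
    a^* * phase a * r - (phase a)^* * a * r - (phase a)^* * phase a * r ^+ 2.
  by ring.
by rewrite aa a_om phaseJ_mul phase_unit; ring.
Qed.

Lemma block_unitary_pivot_vec v :
  exists l, [/\ unitary l, block_diagonal e l & l *m \col_x pivot_vec v x = \col_x v x].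
Proof.
pose om x := phase (v (pivot e x)).
exists (block_reflection e (fun y => v y - pivot_target v y) *m diag_mx (\row_x om x)); split.
- apply: unitaryM; first exact: unitary_block_reflection.
  by apply: unitary_diag => x; rewrite mxE phase_unit.
- apply: block_diagonalM => //; first exact: block_diagonal_reflection.
  exact: block_diagonal_diag.
rewrite -mulmxA (_ : diag_mx _ *m _ = \col_x pivot_target v x); last first.
  by apply/matrixP => x j; rewrite mul_diag_mx !mxE.
rewrite -(block_reflection_col e_refl (pivot_target_orth v)) mulmxA.
by rewrite reflection_involutive ?mul1mx // block_proj_idem.
Qed.

End PivotReduction.

Arguments block_norm {R n} e v x.
Arguments pivot_vec {R n} e v x.

Lemma conjC_real {R : realType} (x : R) : (x%:C)^*%R = x%:C.
Proof. exact: conjc_real. Qed.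

Section Rotations.
Context {R : realType} {n : nat} {i0 : 'I_n}.
Hypothesis i0_val : val i0 = 0%N.
Local Notation C := R[i].

Lemma eq_i0F {x} : val x != 0%N -> (x == i0) = false.
Proof. by move=> x_neq0; apply/negbTE; rewrite -val_eqE i0_val. Qed.

Lemma rotE (ic : 'I_n) (t : R) x z : val ic != 0%N ->
  Defs.rot n (val ic) t x z =
  if x == i0 then (if z == i0 then (cos t)%:C else if z == ic then (- sin t)%:C else 0)
  else if x == ic then (if z == i0 then (sin t)%:C else if z == ic then (cos t)%:C else 0)
  else if x == z then 1 else 0.
Proof.
rewrite mxE -!val_eqE i0_val.
case: x z ic => [x ?] [z ?] [c ?] /= c_neq0.
by do !case: eqP => //=; lia.
Qed.

Lemma rot_mulmxE m (ic : 'I_n) (t : R) (Y : 'M[C]_(n, m)) x j : val ic != 0%N ->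
  (Defs.rot n (val ic) t *m Y) x j =
  if x == i0 then (cos t)%:C * Y i0 j - (sin t)%:C * Y ic j
  else if x == ic then (sin t)%:C * Y i0 j + (cos t)%:C * Y ic j
  else Y x j.
Proof.
move=> ic_neq0; have i0_ic : i0 != ic by rewrite eq_sym eq_i0F.
rewrite mxE; under eq_bigr do rewrite rotE //.
have sum2 (a b : 'I_n) (A B : C) : a != b ->
    \sum_z (if z == a then A else if z == b then B else 0) * Y z j = A * Y a j + B * Y b j.
  move=> ab; rewrite (bigD1 a) //= eqxx (bigD1 b) 1?eq_sym //= (negbTE ab) eqxx.
  rewrite big1 ?addr0 // => z /andP[za zb]; by rewrite (negbTE za) (negbTE zb) mul0r.
case: eqVneq => [_|x_i0]; first by rewrite sum2 // rmorphN mulNr.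
case: eqVneq => [_|x_ic]; first exact: sum2.
rewrite (bigD1 x) //= eqxx mul1r big1 ?addr0 // => z zx.
by rewrite eq_sym (negbTE zx) mul0r.
Qed.

Lemma rotD (ic : 'I_n) (s t : R) : val ic != 0%N ->
  Defs.rot n (val ic) s *m Defs.rot n (val ic) t = Defs.rot n (val ic) (s + t).
Proof.
move=> ic_neq0; apply/matrixP => x z.
rewrite rot_mulmxE // !rotE // !eqxx (eq_i0F ic_neq0) cosD sinD.
case: eqVneq => [_|x_i0]; last case: eqVneq => [_|x_ic] //.
- case: eqVneq => [_|z_i0]; last case: eqVneq => [_|z_ic].
  + by rewrite !rmorphB !rmorphM.
  + by rewrite !rmorphN !rmorphD !rmorphM; ring.
  + by rewrite !mulr0 subr0.
- case: eqVneq => [_|z_i0]; last case: eqVneq => [_|z_ic].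
  + by rewrite !rmorphD !rmorphM.
  + by rewrite !rmorphN !rmorphB !rmorphM; ring.
  + by rewrite !mulr0 addr0.
Qed.

Lemma rot0 c : Defs.rot n c (0 : R) = 1%:M.
Proof.
apply/matrixP => x z; rewrite !mxE cos0 sin0 oppr0.
by rewrite rmorph1 rmorph0 !if_same; case: (x == z).
Qed.

Lemma adjmx_rot (ic : 'I_n) (t : R) :
  val ic != 0%N -> adjmx (Defs.rot n (val ic) t) = Defs.rot n (val ic) (- t).
Proof.
move=> ic_neq0; apply/matrixP => x z; rewrite adjmxE !rotE // cosN sinN opprK.
rewrite !(fun_if Num.conj) !conjC_real rmorph0 rmorph1 [z == x]eq_sym.
case: (eqVneq x i0) => [?|x_i0]; case: (eqVneq z i0) => [?|z_i0]; subst => //=.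
- by rewrite [i0 == z]eq_sym (negbTE z_i0).
- by rewrite (negbTE x_i0).
case: (eqVneq x ic) => [?|x_ic]; case: (eqVneq z ic) => [?|z_ic]; subst => //.
- by rewrite eq_sym (negbTE z_ic).
- by rewrite (negbTE x_ic).
Qed.

Lemma unitary_rot (ic : 'I_n) (t : R) : val ic != 0%N -> unitary (Defs.rot n (val ic) t).
Proof. by move=> ic_neq0; rewrite /unitary adjmx_rot // rotD // addNr rot0. Qed.

Lemma rotprod_pivot_col (cs : seq nat) (y : 'I_n -> R) :
  uniq cs -> all (fun c => 0 < c < n)%N cs ->
  (forall x, val x != 0%N -> val x \notin cs -> y x = 0) ->
  exists2 ts : seq R, size ts = size cs &
    exists rho : R, rotprod n (zip cs ts) *m \col_x (if x == i0 then rho else 0)%:C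
                    = \col_x (y x)%:C.
Proof.
elim: cs y => [|c cs IH] y /=.
  move=> _ _ y_supp; exists [::] => //; exists (y i0); rewrite mul1mx.
  apply/matrixP => x j; rewrite !mxE; case: eqVneq => [->//|x_i0].
  by rewrite y_supp //; move: x_i0; rewrite -val_eqE i0_val.
case/andP=> c_cs cs_uniq /andP[/andP[c_gt0 c_lt] cs_bnd] y_supp.
pose ic := Ordinal c_lt; have ic_neq0 : val ic != 0%N by rewrite -lt0n.
have [t [r_cos r_sin]] := polar_coordinates (y i0) (y ic).
set r := Num.sqrt _ in r_cos r_sin.
pose y' x := if x == i0 then r else if x == ic then 0 else y x.
have y'_supp x : val x != 0%N -> val x \notin cs -> y' x = 0.
  move=> x_neq0 x_cs; rewrite /y' eq_i0F //.
  case: eqVneq => [//|x_ic]; apply: y_supp; rewrite // in_cons negb_or x_cs andbT.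
  by rewrite -[c]/(val ic) val_eqE.
have [ts ts_size [rho rho_col]] := IH y' cs_uniq cs_bnd y'_supp.
exists (t :: ts); first by rewrite /= ts_size.
exists rho; rewrite -mulmxA rho_col -[c]/(val ic).
apply/matrixP => x j.
rewrite rot_mulmxE // !mxE /y' !eqxx (eq_i0F ic_neq0) rmorph0 !mulr0 subr0 addr0.
case: eqVneq => [->|x_i0]; first by rewrite -r_cos rmorphM mulrC.
by case: eqVneq => [->|x_ic]; first by rewrite -r_sin rmorphM mulrC.
Qed.

End Rotations.

Lemma rotprod_unitary {R : realType} n (cs : seq nat) (ts : seq R) :
  all (fun c => 0 < c < n)%N cs -> unitary (rotprod n (zip cs ts)).
Proof.
elim: cs ts => [|c cs IH] [|t ts] /=; try by move=> _; apply: unitary1.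
case/andP=> /andP[c_gt0 c_lt] cs_bnd; apply: unitaryM (IH _ cs_bnd).
pose i0 : 'I_n := Ordinal (ltn_trans c_gt0 c_lt).
by apply: (@unitary_rot _ _ i0 _ (Ordinal c_lt)); rewrite // -lt0n.
Qed.

Lemma inB_unitary {R : realType} {s : seq nat} {b : 'M[R[i]]_(sumn s)} :
  all (fun m => 0 < m)%N s -> inB s b -> unitary b.
Proof.
move=> s_pos [ts [_ ->]]; apply: rotprod_unitary.
by apply/allP => c; apply: mem_cuts_bounds.
Qed.

Lemma unitary_col0_inH {R : realType} {n} {i0 : 'I_n} {h : 'M[R[i]]_n} :
  val i0 = 0%N -> unitary h -> (forall x, x != i0 -> h x i0 = 0) -> inH h.
Proof.
move=> i0_val hU col0; split => // x z.
have row0 y : (h i0 i0)^*%R * h i0 y = (i0 == y)%:R.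
  have := congr1 (fun A : 'M[R[i]]_n => A i0 y) (hU : adjmx h *m h = 1%:M); rewrite !mxE => <-.
  rewrite (bigD1 i0) //= big1 ?addr0 => [|k k_i0]; first by rewrite adjmxE.
  by rewrite adjmxE col0 // conjC0 mul0r.
have h00 : h i0 i0 != 0.
  by apply: contra_eqN (row0 i0) => /eqP->; rewrite mulr0 eqxx eq_sym oner_eq0.
have e0 y : (val y == 0%N) = (y == i0) by rewrite -val_eqE i0_val.
rewrite !e0; case: eqVneq => [->|x_i0]; case: eqVneq => [->|z_i0] //= _; last exact: col0.
apply/eqP; have := row0 z; rewrite eq_sym (negbTE z_i0) => /eqP.
by rewrite mulf_eq0 conjC_eq0 (negbTE h00).
Qed.

Lemma LB_first_col {R : realType} {s : seq nat} {i0 : 'I_(sumn s)} :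
  val i0 = 0%N -> all (fun m => 0 < m)%N s -> forall v : 'I_(sumn s) -> R[i],
  exists l b (rho : R),
    [/\ inL s l, inB s b & l *m b *m \col_x (if x == i0 then rho else 0)%:C = \col_x v x].
Proof.
move=> i0_val s_pos v; set e := block_rel s (sumn s).
have [l [lU l_blk l_col]] :=
  block_unitary_pivot_vec (block_rel_refl s _) (block_rel_sym s _) (block_rel_trans s _) v.
pose y x := complex.Re (pivot_vec e v x).
have y_real x : (y x)%:C = pivot_vec e v x.
  apply/RRe_real/ger0_real; rewrite /pivot_vec.
  by case: ifP; rewrite ?sqrtC_ge0 ?block_sqnorm_ge0.
have y_supp x : val x != 0%N -> val x \notin cuts s -> y x = 0.
  move=> x_neq0 x_cut; rewrite /y /pivot_vec; case: eqVneq => [x_piv|//].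
  by move: x_cut; rewrite block_pivot_cuts // -x_piv.
have cuts_bnd : all (fun c => 0 < c < sumn s)%N (cuts s).
  by apply/allP => c; apply: mem_cuts_bounds.
have [ts ts_size [rho b_col]] :=
  rotprod_pivot_col i0_val _ _ (cuts_uniq s s_pos) cuts_bnd y_supp.
exists l, (rotprod _ (zip (cuts s) ts)), rho; split => //; first by exists ts.
rewrite -mulmxA b_col -l_col; congr (_ *m _).
by apply/matrixP => x j; rewrite !mxE y_real.
Qed.

Theorem theorem5p1 (R : realType) (s : seq nat) :
  s != [::] -> all (fun m => (0 < m)%N) s ->
  forall g : 'M[R[i]]_(sumn s),
    unitary g <->
    exists (l b h : 'M[R[i]]_(sumn s)),
      [/\ inL s l, inB s b, inH h & g = l *m b *m h].
Proof.
move=> s_neq0 s_pos g; split; last first.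
  case=> [l [b [h [[lU _] bB [hU _] ->]]]].
  exact: unitaryM (unitaryM lU (inB_unitary s_pos bB)) hU.
move=> gU.
pose i0 : 'I_(sumn s) := Ordinal (sumn_gt0 s_neq0 s_pos).
have i0_val : val i0 = 0%N by [].
have [l [b [rho [[lU l_blk] bB lb_col]]]] := LB_first_col i0_val s_pos (fun x => g x i0).
have bU := inB_unitary s_pos bB.
pose h := adjmx b *m adjmx l *m g.
have hU : unitary h by apply: unitaryM (unitaryM _ _) gU; apply: unitary_adj.
exists l, b, h; split => //.
- apply: unitary_col0_inH i0_val hU _ => x x_i0.
  have : col i0 h = \col_x (if x == i0 then rho else 0)%:C.
    rewrite colE -mulmxA -colE (_ : col i0 g = \col_x g x i0); last first.
      by apply/matrixP => ? ?; rewrite !mxE.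
    by rewrite -lb_col -!mulmxA !adjmx_mulK.
  by move/matrixP/(_ x 0); rewrite !mxE (negbTE x_i0).
- by rewrite /h !mulmxA -(mulmxA _ b) unitaryC // mulmx1 unitaryC // mul1mx.
Qed.
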